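(* Let $\Phi:\{1,\dots,B\}\to\mathcal{A}=\{1,\dots,A\}$ and let $\Delta(\varepsilon)$ be a $B\times B$ stochastic matrix family normally parameterized by $\varepsilon\ge0$; let $Z=\Phi(Y)$ where $Y$ is the stationary Markov chain with transition matrix $\Delta(\varepsilon)$. Let $z_{-m}^0\in\mathcal{A}^{m+1}$ and $\hat z_{-\hat m}^0\in\mathcal{A}^{\hat m+1}$ be two sequences, and let $n\le m,\hat m$ and $k\ge 0$ be such that $z_{-n}^0=\hat z_{-n}^0$ and $$\mathrm{ord}\big(p(z_{-n}^{-1}\mid z_{-m}^{-n-1})\big)\le k,\qquad \mathrm{ord}\big(p(\hat z_{-n}^{-1}\mid \hat z_{-\hat m}^{-n-1})\big)\le k.$$ Then $b_j(z_{-m}^0)=b_j(\hat z_{-\hat m}^0)$ for all $j$ with $0\le j\le n-4k-1$.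
   Context: For $a\in\mathcal{A}$, $\Delta_a$ is the $B\times B$ matrix with $\Delta_a(i,j)=\Delta(i,j)$ if $\Phi(j)=a$ and $0$ otherwise. A matrix family is a weak Black Hole if every $\Delta_a$ is either the zero matrix or of rank one. $\Delta(\varepsilon)$ is normally parameterized by $\varepsilon\ge0$ if (i) each entry is analytic at $\varepsilon=0$, (ii) for $\varepsilon>0$, $\Delta(\varepsilon)$ is non-negative and irreducible, (iii) $\Delta(0)$ is a weak Black Hole. For $\varepsilon>0$ all probabilities refer to the stationary chain; conditional probabilities of hidden-Markov sequences are analytic around $\varepsilon=0$. For a function $f$ analytic at $\varepsilon=0$, $\mathrm{ord}(f)$ is the degree of the first nonzero term of its Taylor series at $0$. $b_j(z_{-m}^0)$ denotes the coefficient of $\varepsilon^j$ in the Taylor expansion of $p(z_0\mid z_{-m}^{-1})=P(Z_0=z_0\mid Z_{-m}^{-1}=z_{-m}^{-1})$ around $\varepsilon=0$. Notation: $z_{s}^{t}=(z_s,\dots,z_t)$. *)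

From HB Require Import structures.
From mathcomp Require Import all_boot all_order all_algebra.
From mathcomp Require Import all_classical all_reals all_analysis.
Set Implicit Arguments. Unset Strict Implicit. Unset Printing Implicit Defensive.
Import Order.TTheory GRing.Theory Num.Theory.
Import numFieldNormedType.Exports.
Local Open Scope ring_scope.
Local Open Scope classical_set_scope.

Section HMM.
Variables (R : realType) (A B : nat).
Variable Phi : 'I_B -> 'I_A.

Definition restr_mx (D : 'M[R]_B) (a : 'I_A) : 'M[R]_B :=
  \matrix_(i, j) (if Phi j == a then D i j else 0).

Definition weak_black_hole (D : 'M[R]_B) : Prop :=
  forall a : 'I_A, restr_mx D a = 0 \/ \rank (restr_mx D a) = 1%N.

Definition nonneg_mx (D : 'M[R]_B) : Prop := forall i j, 0 <= D i j.

Definition row_stochastic (D : 'M[R]_B) : Prop :=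
  nonneg_mx D /\ forall i, \sum_j D i j = 1.

Definition irreducible_mx (D : 'M[R]_B) : Prop :=
  forall i j, exists k : nat, 0 < (D ^+ k) i j.

Definition power_series_on (r : R) (c : nat -> R) (f : R -> R) : Prop :=
  forall x, `|x| < r ->
    (fun N : nat => \sum_(0 <= k < N) c k * x ^+ k) @ \oo --> f x.

Definition analytic_at0 (f : R -> R) : Prop :=
  exists r c, 0 < r /\ power_series_on r c f.

(* c is the Taylor coefficient sequence at 0 of (the analytic extension of)
   a function f that is only meaningful for eps > 0: the power series
   converges to f on some interval (0, r). *)
Definition taylor_coeffs0 (f : R -> R) (c : nat -> R) : Prop :=
  exists r, 0 < r /\ forall x, 0 < x < r ->
    (fun N : nat => \sum_(0 <= k < N) c k * x ^+ k) @ \oo --> f x.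

Definition ord_le (f : R -> R) (k : nat) : Prop :=
  exists c, taylor_coeffs0 f c /\ exists i, (i <= k)%N /\ c i != 0.

Definition normally_parameterized (Delta : R -> 'M[R]_B) : Prop :=
  [/\ (forall i j, analytic_at0 (fun e => Delta e i j)),
      (forall e, 0 < e -> row_stochastic (Delta e) /\ irreducible_mx (Delta e))
    & weak_black_hole (Delta 0)].

Definition stationary_dist (D : 'M[R]_B) (p : 'rV[R]_B) : Prop :=
  [/\ forall i, 0 <= p 0 i, \sum_i p 0 i = 1 & p *m D = p].

(* Stationary probability P(Z_0^l = s) of a word s = [:: s_0; ...; s_l]
   (listed in time order) for the chain with initial law p, transitions D. *)
Definition word_prob (p : 'rV[R]_B) (D : 'M[R]_B) (s : seq 'I_A) : R :=
  match s with
  | [::] => 1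
  | a :: s' =>
      \sum_i (foldl (fun v b => v *m restr_mx D b)
                    (\row_j (if Phi j == a then p 0 j else 0)) s') 0 i
  end.

(* conditional probability p(u | v) = P(v u) / P(v), v the past, u the future *)
Definition cond_prob (p : 'rV[R]_B) (D : 'M[R]_B) (u v : seq 'I_A) : R :=
  word_prob p D (v ++ u) / word_prob p D v.

End HMM.

(* Let x, xh be the forward vectors of the chain after the two pasts and y, yh
   their continuations along the common block z_{-n}^{-1}.  Since Delta(0) is a
   weak Black Hole, every 2x2 minor of every Delta_a(eps) is O(eps), and right
   multiplication by a matrix whose 2x2 minors are at most eta contracts the
   projective discrepancy Gamma(v, w) = sum_j |v_j |w| - w_j |v|| by the factor
   B^2 eta.  Hence Gamma(y, yh) = O(eps^n) |x| |xh|, and the two predictions of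
   z_0 differ by O(eps^n) / (p(z_{-n}^{-1} | past) p(z_{-n}^{-1} | past')) =
   O(eps^(n-2k)).  Two functions with Taylor expansions that close share their
   first n - 2k coefficients, which is more than the n - 4k claimed. *)

From HB Require Import structures.
From mathcomp Require Import all_boot all_order all_algebra.
From mathcomp Require Import all_classical all_reals all_analysis.
From mathcomp Require Import ring lra zify.
Import Order.TTheory GRing.Theory Num.Theory.
Import numFieldNormedType.Exports.
Set Implicit Arguments. Unset Strict Implicit. Unset Printing Implicit Defensive.
Local Open Scope ring_scope.
Local Open Scope classical_set_scope.

Section SeriesAsymptotics.
Variable R : realType.
Implicit Types (c : nat -> R) (f : R -> R).

Definition power_series_right (r : R) c f := forall x, 0 < x < r ->
  (fun N : nat => \sum_(0 <= k < N) c k * x ^+ k) @ \oo --> f x.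

Lemma cvg_series_term_bounded c (x l : R) :
  (fun N : nat => \sum_(0 <= k < N) c k * x ^+ k) @ \oo --> l ->
  exists M, forall n, `|c n * x ^+ n| <= M.
Proof.
move=> cv.
have cvS : cvgn (series (fun k => c k * x ^+ k)) by apply/cvg_ex; exists l.
have := cvg_seq_bounded (cvgP _ (cvg_series_cvg_0 cvS)).
move=> /= /ex_bound[|M HM]; first exact: (globally_properfilter (a := 0%N)).
by exists M => n; exact: HM.
Qed.

Lemma geometric_sum_le (q : R) N d : 0 <= q -> 2 * q <= 1 ->
  \sum_(N <= k < N + d) q ^+ k <= 2 * q ^+ N - 2 * q ^+ (N + d).
Proof.
move=> q0 q1; elim: d => [|d IH]; first by rewrite addn0 big_geq // subrr.
rewrite addnS big_nat_recr ?leq_addr //= exprS.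
have : 0 <= q ^+ (N + d) * (1 - 2 * q) by rewrite mulr_ge0 ?exprn_ge0 ?subr_ge0.
lra.
Qed.

Lemma series_partial_diff_le c (x y M : R) N K : 0 < y -> 0 <= x -> 2 * x <= y ->
  (forall n, `|c n * y ^+ n| <= M) -> (N <= K)%N ->
  `|\sum_(0 <= k < K) c k * x ^+ k - \sum_(0 <= k < N) c k * x ^+ k|
    <= 2 * M * (x / y) ^+ N.
Proof.
move=> y0 x0 x2 HM /subnKC <-; set q := x / y.
have q0 : 0 <= q by rewrite divr_ge0 // ltW.
have q1 : 2 * q <= 1 by rewrite /q mulrA ler_pdivrMr // mul1r.
have M0 : 0 <= M := le_trans (normr_ge0 _) (HM 0%N).
have xq : x = q * y by rewrite /q divfK // gt_eqF.
rewrite (big_cat_nat _ (leq_addr _ _)) //= addrAC subrr add0r.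
apply: le_trans (ler_norm_sum _ _ _) _.
apply: le_trans (_ : _ <= \sum_(N <= k < N + (K - N)) M * q ^+ k) _.
  apply: ler_sum => k _.
  rewrite xq exprMn mulrCA normrM (ger0_norm (exprn_ge0 _ q0)) mulrC.
  by rewrite ler_wpM2r ?exprn_ge0.
rewrite -mulr_sumr; apply: le_trans (ler_wpM2l M0 (geometric_sum_le _ _ q0 q1)) _.
have := exprn_ge0 (N + (K - N)) q0; nra.
Qed.

Lemma series_remainder_le c f (r : R) : 0 < r -> power_series_right r c f ->
  forall N, exists2 C, 0 <= C & \forall x \near 0^'+,
    `|f x - \sum_(0 <= k < N) c k * x ^+ k| <= C * x ^+ N.
Proof.
move=> r0 Hf N; set y := r / 2.
have y0 : 0 < y by rewrite divr_gt0.
have [M HM] : exists M, forall n, `|c n * y ^+ n| <= M.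
  by apply: cvg_series_term_bounded; apply: Hf; rewrite y0 /y; lra.
have M0 : 0 <= M := le_trans (normr_ge0 _) (HM 0%N).
exists (2 * M / y ^+ N); first by rewrite divr_ge0 ?mulr_ge0 ?exprn_ge0 // ltW.
near=> x.
have x0 : 0 < x by near: x; exact: nbhs_right_gt.
have x2 : x <= y / 2 by near: x; apply: nbhs_right_le; rewrite divr_gt0.
have xr : 0 < x < r by rewrite x0 /=; move: x2; rewrite /y; lra.
rewrite mulrAC -mulrA -expr_div_n.
set S := \sum_(0 <= k < N) c k * x ^+ k.
have cv : (fun K => \sum_(0 <= k < K) c k * x ^+ k - S) @ \oo --> f x - S.
  exact: cvgB (Hf x xr) (cvg_cst S).
have tail K : (N <= K)%N -> `|\sum_(0 <= k < K) c k * x ^+ k - S| <= 2 * M * (x / y) ^+ N.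
  by apply: series_partial_diff_le => //; lra.
rewrite ler_norml; apply/andP; split.
- by apply: (cvgr_to_ge cv); exists N => // K /= /tail; rewrite ler_norml => /andP[].
- by apply: (cvgr_to_le cv); exists N => // K /= /tail; rewrite ler_norml => /andP[].
Unshelve. all: end_near.
Qed.

Lemma series_leading_term_le c f (r : R) j : 0 < r -> power_series_right r c f ->
  (forall i, (i < j)%N -> c i = 0) -> c j != 0 ->
  \forall x \near 0^'+, `|c j| / 2 * x ^+ j <= `|f x|.
Proof.
move=> r0 Hf cz cj.
have [C C0 HC] := series_remainder_le r0 Hf j.+1.
have cj0 : 0 < `|c j| by rewrite normr_gt0.
near=> x.
have x0 : 0 < x by near: x; exact: nbhs_right_gt.
have Cx : C * x <= `|c j| / 2.
  have : x <= `|c j| / 2 / (C + 1).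
    by near: x; apply: nbhs_right_le; rewrite !divr_gt0 // ltr_wpDl.
  rewrite ler_pdivlMr ?ltr_wpDl //; nra.
have Hj : `|f x - c j * x ^+ j| <= C * x ^+ j.+1.
  have -> : c j * x ^+ j = \sum_(0 <= k < j.+1) c k * x ^+ k.
    rewrite big_nat_recr //= big1_seq ?add0r // => i /andP[_].
    by rewrite mem_index_iota => /andP[_ /cz ->]; rewrite mul0r.
  by near: x; exact: HC.
have xj : 0 < x ^+ j by rewrite exprn_gt0.
have := lerB_dist (c j * x ^+ j) (f x).
rewrite distrC normrM (gtr0_norm xj) exprS in Hj *.
have := ler_wpM2r (ltW xj) Cx.
nra.
Unshelve. all: end_near.
Qed.

Lemma ord_le_lower_bound f k : ord_le f k ->
  exists2 d, 0 < d & \forall x \near 0^'+, d * x ^+ k <= `|f x|.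
Proof.
move=> [c [[r [r0 Hc]] [i [ik ci]]]].
have [j cj jmin] := ex_minnP (ex_intro (fun i => c i != 0) i ci).
have cz i' : (i' < j)%N -> c i' = 0.
  by move=> lt; apply/eqP; apply: contraTT lt => /jmin; rewrite leqNgt.
exists (`|c j| / 2); first by rewrite divr_gt0 // normr_gt0.
near=> x.
have x0 : 0 < x by near: x; exact: nbhs_right_gt.
have x1 : x <= 1 by near: x; apply: nbhs_right_le; exact: ltr01.
apply: le_trans (_ : `|c j| / 2 * x ^+ j <= _); last first.
  by near: x; exact: series_leading_term_le r0 Hc cz cj.
rewrite ler_wpM2l ?divr_ge0 // ler_wiXn2l ?ltW //.
exact: leq_trans (jmin _ ci) ik.
Unshelve. all: end_near.
Qed.

Lemma taylor_coeffs0B f g b bg : taylor_coeffs0 f b -> taylor_coeffs0 g bg ->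
  taylor_coeffs0 (f \- g) (b \- bg).
Proof.
move=> [r [r0 Hf]] [s [s0 Hg]]; exists (Num.min r s); split; first by rewrite lt_min r0.
move=> x /andP[x0]; rewrite lt_min => /andP[xr xs].
have -> : (fun N : nat => \sum_(0 <= k < N) (b \- bg) k * x ^+ k) =
    (fun N : nat => \sum_(0 <= k < N) b k * x ^+ k - \sum_(0 <= k < N) bg k * x ^+ k).
  by apply/funext => N; rewrite -sumrB; apply: eq_bigr => k _; rewrite mulrBl.
by apply: cvgB; [apply: Hf | apply: Hg]; rewrite x0.
Qed.

Lemma taylor_coeffs0_eq0_of_bigO f c (K : R) N : taylor_coeffs0 f c ->
  (\forall x \near 0^'+, `|f x| <= K * x ^+ N) -> forall j, (j < N)%N -> c j = 0.
Proof.
move=> [r [r0 Hc]] HK; elim/ltn_ind => j IH jN.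
apply/eqP/negPn/negP => cj.
have cz i : (i < j)%N -> c i = 0 by move=> ij; exact: IH ij (ltn_trans ij jN).
have cj0 : 0 < `|c j| / 2 by rewrite divr_gt0 // normr_gt0.
suff : \forall x \near (0 : R)^'+, False by case/filter_ex.
near=> x.
have x0 : 0 < x by near: x; exact: nbhs_right_gt.
have x1 : x <= 1 by near: x; apply: nbhs_right_le; exact: ltr01.
have xK : x * (`|K| + 1) < `|c j| / 2.
  rewrite -ltr_pdivlMr ?ltr_wpDl //.
  by near: x; apply: nbhs_right_lt; rewrite divr_gt0 // ltr_wpDl.
have : `|c j| / 2 * x ^+ j <= `|K| * x * x ^+ j.
  apply: le_trans (_ : _ <= `|f x|) _.
    by near: x; exact: series_leading_term_le r0 Hc cz cj.
  apply: le_trans (_ : _ <= K * x ^+ N) _; first by near: x.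
  rewrite -mulrA -exprS; apply: le_trans (ler_wpM2r (exprn_ge0 _ (ltW x0)) (ler_norm K)) _.
  by rewrite ler_wpM2l // ler_wiXn2l // ltW.
rewrite ler_pM2r ?exprn_gt0 //; nra.
Unshelve. all: end_near.
Qed.

Lemma taylor_coeffs0_eq_of_bigO g h b bh (K : R) N :
  taylor_coeffs0 g b -> taylor_coeffs0 h bh ->
  (\forall x \near 0^'+, `|g x - h x| <= K * x ^+ N) ->
  forall j, (j < N)%N -> b j = bh j.
Proof.
move=> Hb Hbh HK j jN; apply/eqP; rewrite -subr_eq0; apply/eqP.
exact: (taylor_coeffs0_eq0_of_bigO (taylor_coeffs0B Hb Hbh) HK jN).
Qed.

Lemma power_series_on_at0 (r : R) c f : 0 < r -> power_series_on r c f -> f 0 = c 0%N.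
Proof.
move=> r0 Hc.
have Hc0 : (fun N : nat => \sum_(0 <= k < N) c k * 0 ^+ k) @ \oo --> c 0%N.
  apply: cvg_near_cst; exists 1%N => // N /= N1.
  rewrite big_ltn //= expr0 mulr1 big1_seq ?addr0 // => i /andP[_].
  by rewrite mem_index_iota => /andP[/ltn_predK <- _]; rewrite expr0n /= mulr0.
have norm0_lt_r : `|0 : R| < r by rewrite normr0.
exact: (cvg_unique _ (Hc 0 norm0_lt_r) Hc0).
Qed.

Lemma analytic_at0_lipschitz f : analytic_at0 f ->
  exists2 C, 0 <= C & \forall x \near 0^'+, `|f x - f 0| <= C * x.
Proof.
move=> [r [c [r0 Hc]]].
have Hcr : power_series_right r c f by move=> x /andP[x0 xr]; apply: Hc; rewrite gtr0_norm.
have [C C0 HC] := series_remainder_le r0 Hcr 1.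
exists C => //; rewrite (power_series_on_at0 r0 Hc).
by move: HC; apply: filterS => x; rewrite big_nat1 expr0 mulr1 expr1.
Qed.

Lemma mx_analytic_at0_lipschitz B (D : R -> 'M[R]_B) :
  (forall i j, analytic_at0 (fun e => D e i j)) ->
  exists2 C, 0 <= C & \forall e \near 0^'+, forall i j, `|D e i j - D 0 i j| <= C * e.
Proof.
move=> HD.
have /boolp.choice[C HC] : forall ij : 'I_B * 'I_B, exists C, 0 <= C /\
    \forall e \near 0^'+, `|D e ij.1 ij.2 - D 0 ij.1 ij.2| <= C * e.
  by move=> ij; have [C ? ?] := analytic_at0_lipschitz (HD ij.1 ij.2); exists C.
have C0 ij : 0 <= C ij by case: (HC ij).
exists (\sum_ij C ij); first exact: sumr_ge0.
have Hall : \forall e \near 0^'+, forall ij : 'I_B * 'I_B,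
    `|D e ij.1 ij.2 - D 0 ij.1 ij.2| <= C ij * e.
  by apply: filter_forall => ij; case: (HC ij).
near=> e.
have e0 : 0 < e by near: e; exact: nbhs_right_gt.
have He : forall ij : 'I_B * 'I_B, `|D e ij.1 ij.2 - D 0 ij.1 ij.2| <= C ij * e.
  by near: e.
move=> i j; apply: le_trans (He (i, j)) _; rewrite ler_pM2r //.
by rewrite (bigD1 (i, j)) //= lerDl sumr_ge0.
Unshelve. all: end_near.
Qed.

End SeriesAsymptotics.

Section RealEstimates.
Variable R : realType.

Lemma ratio_gt0 (a b : R) : 0 <= a -> 0 <= b -> 0 < a / b -> 0 < a /\ 0 < b.
Proof.
move=> a0 b0 /gt_eqF/negbT; rewrite mulf_eq0 invr_eq0 negb_or => /andP[an bn].
by rewrite !lt_def an bn a0 b0.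
Qed.

Lemma div_lower_bounds_le (c e d dh P Ph : R) n k :
  0 <= c -> 0 < e -> 0 < d -> 0 < dh -> (2 * k <= n)%N ->
  d * e ^+ k <= P -> dh * e ^+ k <= Ph ->
  c * e ^+ n / (P * Ph) <= c / (d * dh) * e ^+ (n - 2 * k).
Proof.
move=> c0 e0 d0 dh0 kn HP HPh.
have dk : 0 < d * e ^+ k by rewrite mulr_gt0 // exprn_gt0.
have dhk : 0 < dh * e ^+ k by rewrite mulr_gt0 // exprn_gt0.
apply: le_trans (_ : _ <= c * e ^+ n / (d * e ^+ k * (dh * e ^+ k))) _.
  apply: ler_wpM2l; first by rewrite mulr_ge0 // exprn_ge0 // ltW.
  have P0 : 0 < P := lt_le_trans dk HP.
  have Ph0 : 0 < Ph := lt_le_trans dhk HPh.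
  rewrite lef_pV2 ?posrE ?mulr_gt0 ?exprn_gt0 //.
  by apply: ler_pM; rewrite ?(ltW dk) ?(ltW dhk).
have -> : e ^+ n = e ^+ (n - 2 * k) * e ^+ k * e ^+ k.
  by rewrite -!exprD; congr (_ ^+ _); lia.
rewrite [X in X <= _](_ : _ = c / (d * dh) * e ^+ (n - 2 * k)) //.
by field; rewrite !gt_eqF ?exprn_gt0.
Qed.

Lemma mul_perturb_le (a b a0 b0 K delta : R) :
  `|a - a0| <= delta -> `|b - b0| <= delta -> `|a0| <= K -> `|b0| <= K ->
  `|a * b - a0 * b0| <= 2 * K * delta + delta ^+ 2.
Proof.
move=> ha hb ha0 hb0.
have -> : a * b - a0 * b0 = (a - a0) * b0 + a0 * (b - b0) + (a - a0) * (b - b0) by ring.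
apply: le_trans (ler_normD _ _) _; apply: le_trans (lerD (ler_normD _ _) (lexx _)) _.
rewrite !normrM.
have := ler_pM (normr_ge0 _) (normr_ge0 _) ha hb0.
have := ler_pM (normr_ge0 _) (normr_ge0 _) ha0 hb.
have := ler_pM (normr_ge0 _) (normr_ge0 _) ha hb.
nra.
Qed.

End RealEstimates.

Section ProjectiveContraction.
Variables (R : realType) (B : nat).
Implicit Types (v w : 'rV[R]_B) (D : 'M[R]_B).

Definition mass v := \sum_i v 0 i.
Definition row_mass D i := \sum_j D i j.
Definition nonneg_row v := forall i, 0 <= v 0 i.
Definition minor2 D i l j m := D i j * D l m - D l j * D i m.

(* A projective discrepancy: for v, w of positive mass it vanishes exactly
   when v and w are proportional. *)
Definition proj_dist v w := \sum_j `|v 0 j * mass w - w 0 j * mass v|.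

Definition cross_mass D i l j := D i j * row_mass D l - D l j * row_mass D i.

Lemma mass_ge0 v : nonneg_row v -> 0 <= mass v.
Proof. by move=> v0; rewrite sumr_ge0. Qed.

Lemma nonneg_row_mul v D : nonneg_row v -> nonneg_mx D -> nonneg_row (v *m D).
Proof. by move=> v0 D0 i; rewrite mxE sumr_ge0 // => k _; rewrite mulr_ge0. Qed.

Lemma mass_mul v D : mass (v *m D) = \sum_i v 0 i * row_mass D i.
Proof.
rewrite /mass /row_mass; under eq_bigr do rewrite mxE.
by rewrite exchange_big; apply: eq_bigr => i _; rewrite mulr_sumr.
Qed.

Lemma mass0 : mass 0 = 0.
Proof. by rewrite /mass big1 // => i _; rewrite mxE. Qed.

Lemma proj_dist0r v : proj_dist v 0 = 0.
Proof. by rewrite /proj_dist big1 // => j _; rewrite mass0 mxE mulr0 mul0r subrr normr0. Qed.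

Lemma proj_dist_le_mass v w : nonneg_row v -> nonneg_row w ->
  proj_dist v w <= 2 * (mass v * mass w).
Proof.
move=> v0 w0.
have -> : 2 * (mass v * mass w) = \sum_j (v 0 j * mass w + w 0 j * mass v).
  by rewrite big_split /= -!mulr_suml /mass; ring.
apply: ler_sum => j _; apply: le_trans (ler_normB _ _) _.
by rewrite !ger0_norm ?mulr_ge0 ?mass_ge0.
Qed.

Lemma cross_mass_sum D i l j : cross_mass D i l j = \sum_m minor2 D i l j m.
Proof. by rewrite /cross_mass /row_mass !mulr_sumr -sumrB. Qed.

Lemma cross_mass_le D eta i l j : (forall i l j m, `|minor2 D i l j m| <= eta) ->
  `|cross_mass D i l j| <= B%:R * eta.
Proof.
move=> Heta; rewrite cross_mass_sum; apply: le_trans (ler_norm_sum _ _ _) _.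
apply: le_trans (_ : _ <= \sum_(m < B) eta) _; first exact: ler_sum.
by rewrite sumr_const card_ord mulr_natl.
Qed.

Lemma mul_cross_entry v w D j :
  (v *m D) 0 j * mass (w *m D) - (w *m D) 0 j * mass (v *m D) =
  \sum_i \sum_l v 0 i * w 0 l * cross_mass D i l j.
Proof.
rewrite !mass_mul !mxE /cross_mass; move: (row_mass D) => rho.
rewrite [X in _ - X]mulrC !mulr_suml -sumrB; apply: eq_bigr => i _.
by rewrite !mulr_sumr -sumrB; apply: eq_bigr => l _; ring.
Qed.

Lemma mul_cross_entry_self w D j :
  \sum_i \sum_l w 0 i * w 0 l * cross_mass D i l j = 0.
Proof. by rewrite -mul_cross_entry subrr. Qed.

(* Subtracting the vanishing [mul_cross_entry_self] turns the weights of [v]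
   into the entries of [proj_dist v w]. *)
Lemma scaled_mul_cross_entry v w D j :
  mass w * ((v *m D) 0 j * mass (w *m D) - (w *m D) 0 j * mass (v *m D)) =
  \sum_i \sum_l (v 0 i * mass w - w 0 i * mass v) * w 0 l * cross_mass D i l j.
Proof.
transitivity (mass w * (\sum_i \sum_l v 0 i * w 0 l * cross_mass D i l j) -
              mass v * (\sum_i \sum_l w 0 i * w 0 l * cross_mass D i l j)).
  by rewrite mul_cross_entry mul_cross_entry_self mulr0 subr0.
move: (mass v) (mass w) (cross_mass D) => mv mw cross.
rewrite !mulr_sumr -sumrB; apply: eq_bigr => i _.
by rewrite !mulr_sumr -sumrB; apply: eq_bigr => l _; ring.
Qed.

Lemma proj_dist_mul_le v w D eta : nonneg_row w ->
  (forall i l j m, `|minor2 D i l j m| <= eta) ->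
  proj_dist (v *m D) (w *m D) <= B%:R ^+ 2 * eta * proj_dist v w.
Proof.
move=> w0 Heta; have [mw0|mw_neq0] := eqVneq (mass w) 0.
  have -> : w = 0.
    by apply/rowP => i; rewrite mxE; exact: (psumr_eq0P (fun i _ => w0 i) mw0).
  by rewrite mul0mx !proj_dist0r mulr0.
have mw : 0 < mass w by rewrite lt_def mw_neq0 mass_ge0.
have -> : B%:R ^+ 2 * eta * proj_dist v w =
    (mass w)^-1 * \sum_(j < B) B%:R * eta * (mass w * proj_dist v w).
  by rewrite sumr_const card_ord -mulr_natl; field; rewrite gt_eqF.
rewrite ler_pdivlMl // [X in X <= _]mulr_sumr; apply: ler_sum => j _.
rewrite -{1}(ger0_norm (ltW mw)) -normrM scaled_mul_cross_entry.
apply: le_trans (ler_norm_sum _ _ _) _.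
rewrite /proj_dist mulrCA mulr_sumr mulr_sumr; apply: ler_sum => i _.
apply: le_trans (ler_norm_sum _ _ _) _.
rewrite [mass w * _]mulrC [X in _ <= X]mulr_sumr; apply: ler_sum => l _.
rewrite !normrM (ger0_norm (w0 l)) -mulrA mulrC mulrCA.
apply: ler_wpM2l => //; rewrite mulrC; apply: ler_wpM2r => //.
exact: cross_mass_le.
Qed.

Lemma mass_ratio_mul_le y yh D : 0 < mass y -> 0 < mass yh ->
  nonneg_mx D -> (forall i, row_mass D i <= 1) ->
  `|mass (y *m D) / mass y - mass (yh *m D) / mass yh|
    <= proj_dist y yh / (mass y * mass yh).
Proof.
move=> my myh D0 D1.
have myy : 0 < mass y * mass yh by rewrite mulr_gt0.
have -> : mass (y *m D) / mass y - mass (yh *m D) / mass yh =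
    (mass (y *m D) * mass yh - mass (yh *m D) * mass y) / (mass y * mass yh).
  by field; rewrite !gt_eqF.
rewrite normrM [`|_^-1|]gtr0_norm ?invr_gt0 // ler_pM2r ?invr_gt0 //.
have -> : mass (y *m D) * mass yh - mass (yh *m D) * mass y =
    \sum_i (y 0 i * mass yh - yh 0 i * mass y) * row_mass D i.
  rewrite !mass_mul !mulr_suml -sumrB; apply: eq_bigr => i _; ring.
apply: le_trans (ler_norm_sum _ _ _) _; apply: ler_sum => i _.
have rho0 : 0 <= row_mass D i by apply: sumr_ge0 => j _; exact: D0.
by rewrite normrM (ger0_norm rho0) ler_piMr.
Qed.

Lemma rank1_minor2 D i l j m : \rank D = 1%N -> minor2 D i l j m = 0.
Proof.
move=> rk; set L := col_ebase D; set U := row_ebase D.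
have DE a c : D a c = \sum_q L a q * (val q < 1)%:R * U q c.
  rewrite -{1}(mulmx_ebase D) rk mxE; apply: eq_bigr => q _.
  rewrite mxE (bigD1 q) //= big1 ?addr0; first by rewrite mxE eqxx.
  move=> q' q'q; rewrite mxE.
  have -> : (nat_of_ord q' == nat_of_ord q) = false by apply/negbTE; rewrite val_eqE.
  by rewrite mulr0.
rewrite /minor2 !DE !mulr_suml -sumrB big1 // => q _.
rewrite !mulr_sumr -sumrB big1 // => q' _.
have [q0|q0] := ltnP (val q) 1; have [q'0|q'0] := ltnP (val q') 1; rewrite /=; try ring.
have -> : q = q' by apply: val_inj; move: q0 q'0; rewrite !ltnS !leqn0 => /eqP -> /eqP ->.
ring.
Qed.

Lemma minor2_perturb_le D D0 (K delta : R) i l j m :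
  (forall i j, `|D i j - D0 i j| <= delta) -> (forall i j, `|D0 i j| <= K) ->
  `|minor2 D i l j m| <= `|minor2 D0 i l j m| + 2 * (2 * K * delta + delta ^+ 2).
Proof.
move=> Hd HK.
have -> : minor2 D i l j m = minor2 D0 i l j m +
    ((D i j * D l m - D0 i j * D0 l m) - (D l j * D i m - D0 l j * D0 i m)).
  by rewrite /minor2; ring.
apply: le_trans (ler_normD _ _) _; rewrite lerD2l.
apply: le_trans (ler_normB _ _) _.
have := mul_perturb_le (Hd i j) (Hd l m) (HK i j) (HK l m).
have := mul_perturb_le (Hd l j) (Hd i m) (HK l j) (HK i m).
lra.
Qed.

Section Forward.
Variables (A : nat) (M : 'I_A -> 'M[R]_B).

Definition forward v (s : seq 'I_A) := foldl (fun v b => v *m M b) v s.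

Lemma forward_cat v s t : forward v (s ++ t) = forward (forward v s) t.
Proof. exact: foldl_cat. Qed.

Hypothesis M_nonneg : forall b, nonneg_mx (M b).

Lemma forward_nonneg v s : nonneg_row v -> nonneg_row (forward v s).
Proof. by elim: s v => [|b s IH] v v0 //=; apply/IH/nonneg_row_mul. Qed.

Lemma proj_dist_forward_le eta s v w : 0 <= eta ->
  (forall b i l j m, `|minor2 (M b) i l j m| <= eta) -> nonneg_row w ->
  proj_dist (forward v s) (forward w s) <= (B%:R ^+ 2 * eta) ^+ size s * proj_dist v w.
Proof.
move=> eta0 Heta; elim: s v w => [|b s IH] v w w0 /=; first by rewrite expr0 mul1r.
apply: le_trans (IH _ _ (nonneg_row_mul w0 (M_nonneg b))) _.
rewrite [_ ^+ (size s).+1]exprSr -mulrA; apply: ler_wpM2l; last exact: proj_dist_mul_le.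
by rewrite exprn_ge0 // mulr_ge0 // exprn_ge0.
Qed.

End Forward.
End ProjectiveContraction.

Section HiddenMarkov.
Variables (R : realType) (A B : nat) (Phi : 'I_B -> 'I_A).
Implicit Types (p : 'rV[R]_B) (D : 'M[R]_B).

Lemma restr_mx_nonneg D b : nonneg_mx D -> nonneg_mx (restr_mx Phi D b).
Proof. by move=> D0 i j; rewrite mxE; case: ifP. Qed.

Lemma row_mass_restr_le1 D b i : row_stochastic D -> row_mass (restr_mx Phi D b) i <= 1.
Proof.
move=> [D0 D1]; rewrite -(D1 i); apply: ler_sum => j _.
by rewrite mxE; case: ifP.
Qed.

Lemma word_prob_forward p D s : stationary_dist D p ->
  word_prob Phi p D s = mass (forward (restr_mx Phi D) p s).
Proof.
move=> [_ p1 pD]; case: s => [|a s] /=; first by rewrite /mass p1.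
suff -> : \row_j (if Phi j == a then p 0 j else 0) = p *m restr_mx Phi D a by [].
apply/rowP => j; rewrite !mxE; case: ifP => Hj.
  have := congr1 (fun v : 'rV_B => v 0 j) pD; rewrite mxE => <-.
  by apply: eq_bigr => i _; rewrite mxE Hj.
by rewrite big1 // => i _; rewrite mxE Hj mulr0.
Qed.

Lemma cond_prob_forward p D u v : stationary_dist D p ->
  cond_prob Phi p D u v = mass (forward (restr_mx Phi D) (forward (restr_mx Phi D) p v) u)
                          / mass (forward (restr_mx Phi D) p v).
Proof. by move=> Hp; rewrite /cond_prob !word_prob_forward // forward_cat. Qed.

Lemma cond_prob_ge0 p D u v : stationary_dist D p -> nonneg_mx D ->
  0 <= cond_prob Phi p D u v.
Proof.
move=> Hp D0; have [p0 _ _] := Hp; have M0 b := restr_mx_nonneg b D0.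
by rewrite cond_prob_forward // divr_ge0 // mass_ge0 //; do !apply: forward_nonneg.
Qed.

Lemma minor2_restr_black_hole D b i l j m :
  weak_black_hole Phi D -> minor2 (restr_mx Phi D b) i l j m = 0.
Proof. by move/(_ b) => [->|/rank1_minor2 ->]; rewrite // /minor2 !mxE subrr. Qed.

Lemma restr_minor2_le D D0 (K delta : R) b i l j m : weak_black_hole Phi D0 ->
  (forall i j, `|D i j - D0 i j| <= delta) -> (forall i j, `|D0 i j| <= K) ->
  `|minor2 (restr_mx Phi D b) i l j m| <= 2 * (2 * K * delta + delta ^+ 2).
Proof.
move=> Hbh Hd HK.
have Hd' i' j' : `|restr_mx Phi D b i' j' - restr_mx Phi D0 b i' j'| <= delta.
  rewrite !mxE; case: ifP => _; first exact: Hd.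
  by rewrite subrr normr0 (le_trans (normr_ge0 _) (Hd i j)).
have HK' i' j' : `|restr_mx Phi D0 b i' j'| <= K.
  rewrite mxE; case: ifP => _; first exact: HK.
  by rewrite normr0 (le_trans (normr_ge0 _) (HK i j)).
have := minor2_perturb_le i l j m Hd' HK'.
by rewrite (minor2_restr_black_hole _ _ _ _ _ Hbh) normr0 add0r.
Qed.

Lemma cond_prob_next_dist_le D p eta (u v vh : seq 'I_A) a :
  row_stochastic D -> stationary_dist D p -> 0 <= eta ->
  (forall b i l j m, `|minor2 (restr_mx Phi D b) i l j m| <= eta) ->
  0 < cond_prob Phi p D u v -> 0 < cond_prob Phi p D u vh ->
  `|cond_prob Phi p D [:: a] (v ++ u) - cond_prob Phi p D [:: a] (vh ++ u)|
    <= 2 * (B%:R ^+ 2 * eta) ^+ size u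
         / (cond_prob Phi p D u v * cond_prob Phi p D u vh).
Proof.
move=> HD Hp eta0 Heta; have [p0 _ _] := Hp.
have M0 b : nonneg_mx (restr_mx Phi D b) := restr_mx_nonneg b HD.1.
rewrite !cond_prob_forward // !forward_cat /=.
set M := restr_mx Phi D.
set x := forward M p v; set xh := forward M p vh.
set y := forward M x u; set yh := forward M xh u.
have x0 : nonneg_row x by apply: forward_nonneg.
have xh0 : nonneg_row xh by apply: forward_nonneg.
have y0 : nonneg_row y by apply: forward_nonneg.
have yh0 : nonneg_row yh by apply: forward_nonneg.
move=> /(ratio_gt0 (mass_ge0 y0) (mass_ge0 x0)) [my mx].
move=> /(ratio_gt0 (mass_ge0 yh0) (mass_ge0 xh0)) [myh mxh].
apply: le_trans (mass_ratio_mul_le my myh (M0 a) (row_mass_restr_le1 a ^~ HD)) _.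
have Hy : proj_dist y yh <= (B%:R ^+ 2 * eta) ^+ size u * (2 * (mass x * mass xh)).
  apply: le_trans (proj_dist_forward_le M0 u x eta0 Heta xh0) _.
  apply: ler_wpM2l; first by rewrite exprn_ge0 // mulr_ge0 // exprn_ge0.
  exact: proj_dist_le_mass.
rewrite [X in _ <= X](_ : _ = (B%:R ^+ 2 * eta) ^+ size u * (2 * (mass x * mass xh))
                               / (mass y * mass yh)); last by field; rewrite !gt_eqF.
by rewrite ler_pM2r // invr_gt0 mulr_gt0.
Qed.

Lemma normally_parameterized_minor2_bigO (Delta : R -> 'M[R]_B) :
  normally_parameterized Phi Delta ->
  exists2 eta, 0 <= eta & \forall e \near 0^'+, forall b i l j m,
    `|minor2 (restr_mx Phi (Delta e) b) i l j m| <= eta * e.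
Proof.
move=> [HDan _ Hbh].
have [C C0 HC] := mx_analytic_at0_lipschitz HDan.
set K := \sum_(ij : 'I_B * 'I_B) `|Delta 0 ij.1 ij.2|.
have HK i j : `|Delta 0 i j| <= K by rewrite /K (bigD1 (i, j)) //= lerDl sumr_ge0.
have K0 : 0 <= K by rewrite sumr_ge0.
exists (2 * (2 * K * C + C ^+ 2)); first by have := mulr_ge0 K0 C0; nra.
near=> e.
have e0 : 0 < e by near: e; exact: nbhs_right_gt.
have e1 : e <= 1 by near: e; apply: nbhs_right_le; exact: ltr01.
have He : forall i j, `|Delta e i j - Delta 0 i j| <= C * e by near: e.
move=> b i l j m; apply: le_trans (restr_minor2_le b i l j m Hbh He HK) _.
have : 0 <= C ^+ 2 * e * (1 - e) by rewrite mulr_ge0 ?subr_ge0 // mulr_ge0 ?sqr_ge0 // ltW.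
nra.
Unshelve. all: end_near.
Qed.

Lemma cond_prob_next_dist_bigO (Delta : R -> 'M[R]_B) (pi : R -> 'rV[R]_B)
    (u v vh : seq 'I_A) a k :
  normally_parameterized Phi Delta ->
  (forall e, 0 < e -> stationary_dist (Delta e) (pi e)) ->
  ord_le (fun e => cond_prob Phi (pi e) (Delta e) u v) k ->
  ord_le (fun e => cond_prob Phi (pi e) (Delta e) u vh) k ->
  (2 * k <= size u)%N ->
  exists K, \forall e \near 0^'+,
    `|cond_prob Phi (pi e) (Delta e) [:: a] (v ++ u)
      - cond_prob Phi (pi e) (Delta e) [:: a] (vh ++ u)| <= K * e ^+ (size u - 2 * k).
Proof.
move=> HD Hpi Hv Hvh Hk; have [_ HDe _] := HD.
have [eta eta0 Heta] := normally_parameterized_minor2_bigO HD.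
have [d d0 Hd] := ord_le_lower_bound Hv.
have [dh dh0 Hdh] := ord_le_lower_bound Hvh.
exists (2 * (B%:R ^+ 2 * eta) ^+ size u / (d * dh)).
near=> e.
have e0 : 0 < e by near: e; exact: nbhs_right_gt.
have [HDs _] := HDe e e0.
have P0 w : 0 <= cond_prob Phi (pi e) (Delta e) u w := cond_prob_ge0 u w (Hpi e e0) HDs.1.
have Hde : d * e ^+ k <= cond_prob Phi (pi e) (Delta e) u v.
  by rewrite -[X in _ <= X]ger0_norm //; near: e.
have Hdhe : dh * e ^+ k <= cond_prob Phi (pi e) (Delta e) u vh.
  by rewrite -[X in _ <= X]ger0_norm //; near: e.
have ek : 0 < e ^+ k by rewrite exprn_gt0.
apply: le_trans (cond_prob_next_dist_le a HDs (Hpi e e0) _ _ _ _) _.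
- exact: mulr_ge0 eta0 (ltW e0).
- by near: e.
- exact: lt_le_trans (mulr_gt0 d0 ek) Hde.
- exact: lt_le_trans (mulr_gt0 dh0 ek) Hdhe.
rewrite mulrA exprMn mulrA; apply: div_lower_bounds_le => //.
by rewrite mulr_ge0 // exprn_ge0 // mulr_ge0 // exprn_ge0.
Unshelve. all: end_near.
Qed.

End HiddenMarkov.

Theorem lemma2p5 (R : realType) (A B : nat) (Phi : 'I_B -> 'I_A)
  (Delta : R -> 'M[R]_B) (pi : R -> 'rV[R]_B)
  (m mh n k : nat) (z zh : seq 'I_A) :
  normally_parameterized Phi Delta ->
  (forall e, 0 < e -> stationary_dist (Delta e) (pi e)) ->
  size z = m.+1 -> size zh = mh.+1 ->
  (n <= m)%N -> (n <= mh)%N ->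
  drop (m - n) z = drop (mh - n) zh ->
  ord_le (fun e => cond_prob Phi (pi e) (Delta e)
                     (take n (drop (m - n) z)) (take (m - n) z)) k ->
  ord_le (fun e => cond_prob Phi (pi e) (Delta e)
                     (take n (drop (mh - n) zh)) (take (mh - n) zh)) k ->
  forall b bh : nat -> R,
    taylor_coeffs0 (fun e => cond_prob Phi (pi e) (Delta e)
                               (drop m z) (take m z)) b ->
    taylor_coeffs0 (fun e => cond_prob Phi (pi e) (Delta e)
                               (drop mh zh) (take mh zh)) bh ->
    forall j : nat, (j + 4 * k + 1 <= n)%N -> b j = bh j.
Proof.
move=> HDelta Hpi sz szh nm nmh Hw Hord Hordh b bh Hb Hbh j hj.
set w := drop (m - n) z in Hw Hord; rewrite -Hw in Hordh.
have sw : size w = n.+1 by rewrite size_drop sz; lia.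
have [a Ha] : exists a, drop n w = [:: a].
  by move: (size_drop n w); rewrite sw subSnn; case: (drop n w) => [|a []] //; exists a.
have split_at t l : size t = l.+1 -> (n <= l)%N -> drop (l - n) t = w ->
    take l t = take (l - n) t ++ take n w /\ drop l t = [:: a].
  move=> st nl Htw; rewrite -Htw -takeD subnK //; split=> //.
  by rewrite -Ha -Htw drop_drop addnC subnK.
have [Ez Ez'] := split_at z m sz nm erefl.
have [Ezh Ezh'] := split_at zh mh szh nmh (esym Hw).
rewrite Ez Ez' in Hb; rewrite Ezh Ezh' in Hbh.
have su : size (take n w) = n by rewrite size_takel // sw.
have [K HK] := cond_prob_next_dist_bigO a HDelta Hpi Hord Hordh (ltac:(rewrite su; lia)).
by apply: (taylor_coeffs0_eq_of_bigO Hb Hbh HK); rewrite su; lia.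
Qed.
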